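(* Fix $i\in\mathcal V$. Let $\mathbf u\in\mathcal A(b):=\{\mathbf w\in\mathbb R^{d+2}:0<\rho(\mathbf w)<b^{-1}\}$ and $\mathbf p\in\mathbb R^{d+2}$, and let $\ell_0>0$ be such that $\mathbf u+\ell_0\mathbf p\in\mathcal A(b)$. Define $f:[0,\ell_0]\to\mathbb R$ by $f(\ell)=\Phi_i^s(\mathbf u+\ell\mathbf p)$, where $$\Phi_i^s(\mathbf w)=\rho(\mathbf w)E(\mathbf w)-\tfrac12\|\mathbf m(\mathbf w)\|^2-S_i^{\min,n}\rho(\mathbf w)^{\gamma_i^{\min,n}+1}(1-b\rho(\mathbf w))^{1-\gamma_i^{\min,n}}.$$ Then the sign of $f'''(\ell)$ is constant over $[0,\ell_0]$ (i.e. $f''$ is monotone on $[0,\ell_0]$).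
   Context: Let $d\ge1$, $b\ge0$ (when $b=0$, read $b^{-1}=+\infty$). For $\mathbf w\in\mathbb R^{d+2}$, $\rho(\mathbf w)$ is its first component, $\mathbf m(\mathbf w)\in\mathbb R^d$ its components $2$ to $d+1$, $E(\mathbf w)$ its last component; for $\rho>0$, $e(\mathbf w)=E/\rho-\tfrac12\|\mathbf m/\rho\|^2$. Admissible set $\mathcal B(b)=\{\rho>0,\ 1-b\rho>0,\ e>0\}$. A pressure oracle $p:\mathcal B(b)\to[0,\infty)$ is given, with flux $\mathbb f(\mathbf w)=(\mathbf m,\ \frac{\mathbf m}{\rho}\otimes\mathbf m+p\,\mathbb I_d,\ \frac{\mathbf m}{\rho}(E+p))^{\mathsf T}$. Discretization: finite index set $\mathcal V$, stencils $\mathcal I(i)\ni i$, masses $m_i>0$, vectors $\mathbf c_{ij}\in\mathbb R^d$ ($\mathbf c_{ij}=-\mathbf c_{ji}$, $\sum_j\mathbf c_{ij}=0$, nonzero for $j\ne i$), $\mathbf n_{ij}=\mathbf c_{ij}/\|\mathbf c_{ij}\|$, states $\mathsf U_k^n=(\varrho_k^n,\mathsf M_k^n,\mathsf E_k^n)\in\mathcal B(b)$ for all $k$. $\gamma_k^n=1+\frac{p(\mathsf U_k^n)(1-b\varrho_k^n)}{\varrho_k^n e(\mathsf U_k^n)}$ and $\gamma_i^{\min,n}=\min_{j\in\mathcal I(i)}\gamma_j^n$ (so $\gamma_i^{\min,n}\ge1$). For $j\ne i$, $d_{ij}^{\mathrm L,n}=\max(\widehat\lambda(\mathbf n_{ij},\mathsf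 U_i^n,\mathsf U_j^n)\|\mathbf c_{ij}\|,\widehat\lambda(\mathbf n_{ji},\mathsf U_j^n,\mathsf U_i^n)\|\mathbf c_{ji}\|)$, where $\widehat\lambda$ is a positive upper bound on the maximum wave speed of the associated one-dimensional extended Riemann problem (any positive numbers are admissible for the present statement), and $\overline{\mathsf U}_{ij}^n=\tfrac12(\mathsf U_i^n+\mathsf U_j^n)-\frac{1}{2d_{ij}^{\mathrm L,n}}(\mathbb f(\mathsf U_j^n)-\mathbb f(\mathsf U_i^n))\mathbf c_{ij}$. With $S(\mathbf w,\gamma)=\frac{\rho e(\mathbf w)}{\rho^\gamma}(1-b\rho)^{\gamma-1}$, set $S_i^{\min,n}=\min\big(\min_{j\in\mathcal I(i)}S(\mathsf U_j^n,\gamma_i^{\min,n}),\min_{j\in\mathcal I(i)\setminus\{i\}}S(\overline{\mathsf U}_{ij}^n,\gamma_i^{\min,n})\big)$, which is a nonnegative constant in the setting of the paper (the auxiliary states lie in $\mathcal B(b)$). $\Phi_i^s(\mathbf w)=\rho(\mathbf w)\Psi_i^s(\mathbf w)$ where $\Psi_i^s(\mathbf w)=\rho e(\mathbf w)-S_i^{\min,n}\rho^{\gamma_i^{\min,n}}(1-b\rho)^{1-\gamma_i^{\min,n}}$. *)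

From HB Require Import structures.
From mathcomp Require Import all_boot all_order all_algebra.
From mathcomp Require Import all_classical all_reals all_analysis.
Set Implicit Arguments. Unset Strict Implicit. Unset Printing Implicit Defensive.
Import Order.TTheory GRing.Theory Num.Theory.
Import numFieldNormedType.Exports.
Local Open Scope ring_scope.

Section Euler.
Variable R : realType.
(* the paper's space dimension is d.+1 (so it is >= 1); states live in
   R^{(d.+1)+2} = 'rV_(d.+3) *)
Variable d : nat.

Definition rho (w : 'rV[R]_(d.+3)) : R := w 0 ord0.
Definition mom (w : 'rV[R]_(d.+3)) (k : 'I_(d.+1)) : R := w 0 (inord k.+1).
Definition Eng (w : 'rV[R]_(d.+3)) : R := w 0 ord_max.
Definition msq (w : 'rV[R]_(d.+3)) : R := \sum_(k < d.+1) mom w k ^+ 2.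

Definition eint (w : 'rV[R]_(d.+3)) : R :=
  Eng w / rho w - 2^-1 * \sum_(k < d.+1) (mom w k / rho w) ^+ 2.

(* admissible set B(b); the condition 1 - b rho > 0 reads b^{-1}=+oo when b=0 *)
Definition inB (b : R) (w : 'rV[R]_(d.+3)) : Prop :=
  0 < rho w /\ 0 < 1 - b * rho w /\ 0 < eint w.

(* A(b) = { 0 < rho < b^{-1} } (with b^{-1} = +oo when b = 0) *)
Definition inA (b : R) (w : 'rV[R]_(d.+3)) : Prop :=
  0 < rho w /\ 0 < 1 - b * rho w.

Definition vnorm (c : 'rV[R]_(d.+1)) : R := Num.sqrt (\sum_(k < d.+1) c 0 k ^+ 2).
Definition vdot (x y : 'rV[R]_(d.+1)) : R := \sum_(k < d.+1) x 0 k * y 0 k.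

(* the flux f(w) applied to the vector c, i.e. f(w) c in R^{d+2}, with
   f(w) = (m, m/rho (x) m + p I_d, m/rho (E+p))^T *)
Definition flux_c (p : 'rV[R]_(d.+3) -> R) (w : 'rV[R]_(d.+3)) (c : 'rV[R]_(d.+1))
  : 'rV[R]_(d.+3) :=
  let mc := \sum_(k < d.+1) mom w k * c 0 k in
  \row_(l < d.+3)
    if (l : nat) == 0%N then mc
    else if (l : nat) == d.+2 then mc / rho w * (Eng w + p w)
    else mom w (inord l.-1) / rho w * mc + p w * c 0 (inord l.-1).

Definition Sfun (b : R) (w : 'rV[R]_(d.+3)) (g : R) : R :=
  rho w * eint w / powR (rho w) g * powR (1 - b * rho w) (g - 1).

Section Discretization.
Variable V : finType.
Variables (b : R) (p : 'rV[R]_(d.+3) -> R) (I : V -> {set V})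
  (c : V -> V -> 'rV[R]_(d.+1)) (U : V -> 'rV[R]_(d.+3))
  (lam : 'rV[R]_(d.+1) -> 'rV[R]_(d.+3) -> 'rV[R]_(d.+3) -> R).

Definition gammak (k : V) : R :=
  1 + p (U k) * (1 - b * rho (U k)) / (rho (U k) * eint (U k)).

Definition gamma_min (i : V) : R :=
  \big[Num.min/gammak i]_(j in I i) gammak j.

Definition nvec (i j : V) : 'rV[R]_(d.+1) := (vnorm (c i j))^-1 *: c i j.

Definition dL (i j : V) : R :=
  Num.max (lam (nvec i j) (U i) (U j) * vnorm (c i j))
          (lam (nvec j i) (U j) (U i) * vnorm (c j i)).

Definition Ubar (i j : V) : 'rV[R]_(d.+3) :=
  2^-1 *: (U i + U j) - (2 * dL i j)^-1 *: (flux_c p (U j) (c i j) - flux_c p (U i) (c i j)).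

(* S_i^{min,n}; the default value S(U_i, gamma) used for the second minimum
   (over I(i)\{i}) does not change the overall minimum since i \in I(i). *)
Definition S_min (i : V) : R :=
  let g := gamma_min i in
  Num.min (\big[Num.min/Sfun b (U i) g]_(j in I i) Sfun b (U j) g)
          (\big[Num.min/Sfun b (U i) g]_(j in I i | j != i) Sfun b (Ubar i j) g).

Definition Phi_s (i : V) (w : 'rV[R]_(d.+3)) : R :=
  rho w * Eng w - 2^-1 * msq w
  - S_min i * powR (rho w) (gamma_min i + 1) * powR (1 - b * rho w) (1 - gamma_min i).

End Discretization.
End Euler.

From HB Require Import structures.
From mathcomp Require Import all_boot all_order all_algebra.
From mathcomp Require Import all_classical all_reals all_analysis.
From mathcomp Require Import ring lra.
Set Implicit Arguments. Unset Strict Implicit. Unset Printing Implicit Defensive.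
Import Order.TTheory GRing.Theory Num.Theory.
Import numFieldNormedType.Exports.
Local Open Scope ring_scope.
Local Open Scope classical_set_scope.

(* Along the segment u + l q the density rho is affine in l, so
   rho E - |m|^2 / 2 is a quadratic polynomial in l and has no third
   derivative.  The remaining term is S rho^(g+1) (1 - b rho)^(1-g); because
   its two exponents sum to 2, the eight terms of its third derivative collapse
   to r1^3 (g+1) g (g-1) rho^(g-2) (1 - b rho)^(-g-2), with r1 the slope of
   rho.  Since S >= 0 and g >= 1, f''' has the sign of -r1^3 on the whole
   admissible segment. *)

Section Derivatives.
Variable R : realType.

Lemma is_derive_horner (p : {poly R}) (x : R) : is_derive x 1 (horner p) p^`().[x].
Proof.
elim/poly_ind: p => [|p c IHp].
  rewrite deriv0 horner0.
  have -> : horner (0 : {poly R}) = cst 0 by apply: funext => y; rewrite horner0.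
  exact: is_derive_cst.
have -> : horner (p * 'X + c%:P) = horner p * id + cst c.
  by apply: funext => y; rewrite !hornerE.
rewrite derivMXaddC hornerD hornerMX.
apply: is_derive_eq; rewrite /GRing.scale /=; ring.
Qed.

Lemma is_derive_derive1n (D : set R) (F : nat -> R -> R) :
  open D -> (forall n x, D x -> is_derive x 1 (F n) (F n.+1 x)) ->
  forall n x, D x -> is_derive x 1 (derive1n n (F 0)) (F n.+1 x).
Proof.
move=> oD dF; elim=> [|n IHn] x Dx; first exact: dF.
apply: near_eq_is_derive (dF n.+1 x Dx).
near=> y; rewrite derive1nS derive1E.
have Dy : D y by near: y; exact: oD.
by case: (IHn y Dy) => _ ->.
Unshelve. all: by end_near.
Qed.
End Derivatives.

Section PowersAlongLine.
Variables (R : realType) (r0 r1 b : R).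

Definition rho_line (l : R) : R := r0 + l * r1.
Definition covolume_line (l : R) : R := 1 - b * rho_line l.
Definition admissible_line : set R :=
  [set l | 0 < rho_line l /\ 0 < covolume_line l].
Definition pow_line (a c l : R) : R := rho_line l `^ a * covolume_line l `^ c.

Fixpoint pow_line_deriv (n : nat) (a c l : R) : R :=
  if n is n'.+1 then
    a * r1 * pow_line_deriv n' (a - 1) c l - c * (b * r1) * pow_line_deriv n' a (c - 1) l
  else pow_line a c l.

Lemma is_derive_rho_line (l : R) : is_derive l 1 rho_line r1.
Proof.
have -> : rho_line = cst r0 + r1 *: id by apply: funext => x; rewrite /rho_line /= mulrC.
by apply: is_derive_eq; rewrite /GRing.scale /=; ring.
Qed.

Lemma is_derive_covolume_line (l : R) : is_derive l 1 covolume_line (- (b * r1)).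
Proof.
have -> : covolume_line = cst 1 - b *: rho_line by [].
have rho'_l := is_derive_rho_line l.
by apply: is_derive_eq; rewrite /GRing.scale /=; ring.
Qed.

Lemma open_admissible_line : open admissible_line.
Proof.
have cont (f : R -> R) df : (forall l : R, is_derive l 1 f (df : R)) -> continuous f.
  move=> f'df l; apply: differentiable_continuous.
  by apply/derivable1_diffP; apply: ex_derive; apply: f'df.
have -> : admissible_line =
    rho_line @^-1` [set x | 0 < x] `&` covolume_line @^-1` [set x | 0 < x] by [].
apply: openI; apply: open_comp; do ?exact: open_gt.
- by move=> l _; exact: (cont _ _ is_derive_rho_line).
- by move=> l _; exact: (cont _ _ is_derive_covolume_line).
Qed.

Lemma is_derive_pow_line a c l : admissible_line l ->
  is_derive l 1 (pow_line a c) (pow_line_deriv 1 a c l).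
Proof.
move=> [rl_gt0 cl_gt0].
have -> : pow_line a c = ((@powR R)^~ a \o rho_line) * ((@powR R)^~ c \o covolume_line) by [].
have dr := is_derive1_comp (is_derive1_powR a rl_gt0) (is_derive_rho_line l).
have dc := is_derive1_comp (is_derive1_powR c cl_gt0) (is_derive_covolume_line l).
by apply: is_derive_eq; rewrite /= /pow_line /GRing.scale /=; ring.
Qed.

Lemma is_derive_pow_line_deriv n a c l : admissible_line l ->
  is_derive l 1 (pow_line_deriv n a c) (pow_line_deriv n.+1 a c l).
Proof.
move=> adm; elim: n a c => [|n IHn] a c; first exact: is_derive_pow_line.
have -> : pow_line_deriv n.+1 a c =
  (a * r1) *: pow_line_deriv n (a - 1) c - (c * (b * r1)) *: pow_line_deriv n a (c - 1) by [].
have da := IHn (a - 1) c; have dc := IHn a (c - 1).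
by apply: is_derive_eq; rewrite /GRing.scale /=; ring.
Qed.

Lemma pow_line_shift a c a' c' (k j : nat) l : admissible_line l ->
  a = a' + k%:R -> c = c' + j%:R ->
  pow_line a c l = pow_line a' c' l * rho_line l ^+ k * covolume_line l ^+ j.
Proof.
move=> [rl_gt0 cl_gt0] -> ->.
rewrite /pow_line !powRD; last 2 first.
- by apply/implyP => _; rewrite gt_eqF.
- by apply/implyP => _; rewrite gt_eqF.
rewrite !powR_mulrn; [ring | exact: ltW..].
Qed.

Lemma pow_line_deriv3 g l : admissible_line l ->
  pow_line_deriv 3 (g + 1) (1 - g) l =
  r1 ^+ 3 * ((g + 1) * g * (g - 1)) * pow_line (g - 2) (- g - 2) l.
Proof.
move=> adm /=.
rewrite !(@pow_line_shift (g + 1 - 1 - 1 - 1) (1 - g) (g - 2) (- g - 2) 0 3 l adm);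
  [| ring | ring].
rewrite !(@pow_line_shift (g + 1 - 1 - 1) (1 - g - 1) (g - 2) (- g - 2) 1 2 l adm);
  [| ring | ring].
rewrite !(@pow_line_shift (g + 1 - 1) (1 - g - 1 - 1) (g - 2) (- g - 2) 2 1 l adm);
  [| ring | ring].
rewrite !(@pow_line_shift (g + 1) (1 - g - 1 - 1 - 1) (g - 2) (- g - 2) 3 0 l adm);
  [| ring | ring].
by rewrite /covolume_line; ring.
Qed.

Lemma admissible_line_segment l0 l :
  admissible_line 0 -> admissible_line l0 -> 0 <= l <= l0 -> admissible_line l.
Proof.
move=> + + /andP[l_ge0 l_le0].
have affine_gt0 (x y : R) : 0 < x -> 0 < x + l0 * y -> 0 < x + l * y.
  by move=> ? ?; have [?|?] := lerP 0 y; nra.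
rewrite /admissible_line /covolume_line /rho_line /= mul0r addr0.
move=> [r0_gt0 c0_gt0] [rl0_gt0 cl0_gt0]; split; first exact: affine_gt0.
have covE t : 1 - b * (r0 + t * r1) = (1 - b * r0) + t * - (b * r1) by ring.
by rewrite covE; apply: affine_gt0; rewrite // -covE.
Qed.

Section PhiAlongLine.
Variables (P : {poly R}) (S g : R).

Definition phi_line_deriv (n : nat) (l : R) : R :=
  (derivn n P).[l] - S * pow_line_deriv n (g + 1) (1 - g) l.

Lemma is_derive_phi_line_deriv n l : admissible_line l ->
  is_derive l 1 (phi_line_deriv n) (phi_line_deriv n.+1 l).
Proof.
move=> adm.
have -> : phi_line_deriv n = horner (derivn n P) - S *: pow_line_deriv n (g + 1) (1 - g) by [].
have dP := is_derive_horner (derivn n P) l.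
have dK := is_derive_pow_line_deriv n (g + 1) (1 - g) adm.
by apply: is_derive_eq; rewrite /phi_line_deriv derivnS /GRing.scale.
Qed.

Lemma derive3_phi_line l : (size P <= 3)%N -> admissible_line l ->
  derive1n 3 (phi_line_deriv 0) l =
  - (r1 ^+ 3 * (S * ((g + 1) * g * (g - 1)) * pow_line (g - 2) (- g - 2) l)).
Proof.
move=> sizeP adm.
rewrite derive1nS derive1E.
have [_ ->] := is_derive_derive1n open_admissible_line is_derive_phi_line_deriv 2 adm.
by rewrite /phi_line_deriv derivn_poly0 // horner0 pow_line_deriv3 //; ring.
Qed.

End PhiAlongLine.
End PowersAlongLine.

Section Scheme.
Variables (R : realType) (d : nat).

Lemma rho_along_line (u q : 'rV[R]_(d.+3)) l :
  rho (u + l *: q) = rho_line (rho u) (rho q) l.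
Proof. by rewrite /rho /rho_line !mxE. Qed.

Lemma inA_along_line b (u q : 'rV[R]_(d.+3)) l :
  inA b (u + l *: q) <-> admissible_line (rho u) (rho q) b l.
Proof. by rewrite /inA /admissible_line /covolume_line rho_along_line. Qed.

Definition kinetic_poly (u q : 'rV[R]_(d.+3)) : {poly R} :=
  Poly [:: rho u * Eng u - 2^-1 * msq u;
           rho u * Eng q + rho q * Eng u - \sum_(k < d.+1) mom u k * mom q k;
           rho q * Eng q - 2^-1 * msq q].

Lemma kinetic_poly_along_line (u q : 'rV[R]_(d.+3)) l :
  rho (u + l *: q) * Eng (u + l *: q) - 2^-1 * msq (u + l *: q) = (kinetic_poly u q).[l].
Proof.
rewrite horner_Poly /= rho_along_line /rho_line /Eng !mxE /msq.
have -> : \sum_(k < d.+1) mom (u + l *: q) k ^+ 2 =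
    \sum_(k < d.+1) (mom u k ^+ 2 + 2 * l * (mom u k * mom q k) + l ^+ 2 * mom q k ^+ 2).
  by apply: eq_bigr => k _; rewrite /mom !mxE; ring.
by rewrite !big_split /= -!mulr_sumr; field.
Qed.

Variables (V : finType) (b : R) (p : 'rV[R]_(d.+3) -> R) (I : V -> {set V})
  (c : V -> V -> 'rV[R]_(d.+1)) (U : V -> 'rV[R]_(d.+3))
  (lam : 'rV[R]_(d.+1) -> 'rV[R]_(d.+3) -> 'rV[R]_(d.+3) -> R).
Hypothesis p_ge0 : forall w, inB b w -> 0 <= p w.
Hypothesis U_adm : forall k, inB b (U k).

Lemma gammak_ge1 k : 1 <= gammak b p U k.
Proof.
have [rho_gt0 [cov_gt0 e_gt0]] := U_adm k.
rewrite /gammak lerDl divr_ge0 ?mulr_ge0 ?p_ge0 //; exact: ltW.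
Qed.

Lemma gamma_min_ge1 i : 1 <= gamma_min b p I U i.
Proof.
apply: (big_ind (fun x => 1 <= x)); [exact: gammak_ge1 | | by move=> k _; exact: gammak_ge1].
by move=> x y x_ge1 y_ge1; rewrite le_min x_ge1 y_ge1.
Qed.

Lemma Sfun_ge0 (w : 'rV[R]_(d.+3)) g : inB b w -> 0 <= Sfun b w g.
Proof.
move=> [rho_gt0 [_ e_gt0]].
by rewrite /Sfun !mulr_ge0 ?invr_ge0 ?powR_ge0 ?ltW.
Qed.

Lemma S_min_ge0 i : (forall j, j \in I i -> j != i -> inB b (Ubar p c U lam i j)) ->
  0 <= S_min b p I c U lam i.
Proof.
move=> Ubar_adm; rewrite le_min; apply/andP; split; apply: (big_ind (fun x => 0 <= x));
  do ?[exact: Sfun_ge0 | by move=> x y x_ge0 y_ge0; rewrite le_min x_ge0 y_ge0].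
- by move=> j _; exact: Sfun_ge0.
- by move=> j /andP[j_in j_neq]; apply: Sfun_ge0; exact: Ubar_adm.
Qed.

Lemma Phi_s_along_line i (u q : 'rV[R]_(d.+3)) l :
  Phi_s b p I c U lam i (u + l *: q) =
  phi_line_deriv (rho u) (rho q) b (kinetic_poly u q)
    (S_min b p I c U lam i) (gamma_min b p I U i) 0 l.
Proof.
rewrite /Phi_s /phi_line_deriv derivn0 -kinetic_poly_along_line /=.
by rewrite /pow_line /covolume_line -rho_along_line; ring.
Qed.

End Scheme.

Theorem lemma4p6 (R : realType) (d : nat) (V : finType) (b : R)
  (p : 'rV[R]_(d.+3) -> R) (I : V -> {set V}) (mass : V -> R)
  (c : V -> V -> 'rV[R]_(d.+1)) (U : V -> 'rV[R]_(d.+3))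
  (lam : 'rV[R]_(d.+1) -> 'rV[R]_(d.+3) -> 'rV[R]_(d.+3) -> R)
  (hb : 0 <= b)
  (hp : forall w, inB b w -> 0 <= p w)
  (hI : forall k, k \in I k)
  (hmass : forall k, 0 < mass k)
  (hc_anti : forall k l, c k l = - c l k)
  (hc_sum : forall k, \sum_(l in I k) c k l = 0)
  (hc_nz : forall k l, l \in I k -> l != k -> c k l != 0)
  (hU : forall k, inB b (U k))
  (hlam : forall n u v, 0 < lam n u v)
  (i : V)
  (hUbar : forall j, j \in I i -> j != i -> inB b (Ubar p c U lam i j))
  (u q : 'rV[R]_(d.+3)) (l0 : R) :
  inA b u -> 0 < l0 -> inA b (u + l0 *: q) ->
  let f := fun l : R => Phi_s b p I c U lam i (u + l *: q) in
  (forall l, 0 <= l <= l0 ->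
     derivable f l 1 /\ derivable (derive1 f) l 1 /\ derivable (derive1n 2 f) l 1) /\
  ((forall l, 0 <= l <= l0 -> 0 <= derive1n 3 f l) \/
   (forall l, 0 <= l <= l0 -> derive1n 3 f l <= 0)).
Proof.
move=> u_adm l0_gt0 ul0_adm f.
set S := S_min b p I c U lam i; set g := gamma_min b p I U i.
have g_ge1 : 1 <= g by exact: gamma_min_ge1.
have S_ge0 : 0 <= S by exact: S_min_ge0.
have fE : f = phi_line_deriv (rho u) (rho q) b (kinetic_poly u q) S g 0.
  by apply: funext => l; rewrite /f Phi_s_along_line.
have adm l : 0 <= l <= l0 -> admissible_line (rho u) (rho q) b l.
  by apply: admissible_line_segment; apply/inA_along_line; rewrite ?scale0r ?addr0.
have f' := is_derive_derive1n (@open_admissible_line _ (rho u) (rho q) b)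
  (@is_derive_phi_line_deriv _ (rho u) (rho q) b (kinetic_poly u q) S g).
split.
  move=> l /adm l_adm; rewrite fE; do !split; apply: ex_derive;
  [exact: (f' 0%N _ l_adm) | exact: (f' 1%N _ l_adm) | exact: (f' 2%N _ l_adm)].
have M_ge0 l :
    0 <= S * ((g + 1) * g * (g - 1)) * pow_line (rho u) (rho q) b (g - 2) (- g - 2) l.
  by rewrite /pow_line !mulr_ge0 ?powR_ge0 ?subr_ge0 //; lra.
have [r1_ge0 | r1_lt0] := lerP 0 (rho q); [right | left] => l /adm l_adm;
  rewrite fE derive3_phi_line ?size_Poly //.
- by rewrite oppr_le0 mulr_ge0 ?exprn_ge0.
- by rewrite oppr_ge0 mulr_le0_ge0 // exprS mulr_le0_ge0 ?sqr_ge0 ?ltW.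
Qed.
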